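(* Let $\mathcal{T},\mathcal{T}'$ be essentially small triangulated categories and let $F:\mathcal{T}\to\mathcal{T}'$ be an exact functor which is a triangle equivalence up to direct summands, i.e. $F$ is fully faithful and every object of $\mathcal{T}'$ is a direct summand of $F(M)$ for some $M\in\mathcal{T}$. For a thick subcategory $\mathcal{Y}$ of $\mathcal{T}'$ put $F^{-1}(\mathcal{Y}):=\{M\in\mathcal{T}\mid F(M)\in\mathcal{Y}\}$. Then: (1) The map $\operatorname{Th}(\mathcal{T}')\to\operatorname{Th}(\mathcal{T})$, $\mathcal{Y}\mapsto F^{-1}(\mathcal{Y})$, is a lattice isomorphism. (2) For a thick subcategory $\mathcal{Q}$ of $\mathcal{T}'$, $\mathcal{Q}$ is a prime thick subcategory of $\mathcal{T}'$ if and only if $F^{-1}(\mathcal{Q})$ is a prime thick subcategory of $\mathcal{T}$. (3) The map ${}^aF:\operatorname{Spec}_\triangle(\mathcal{T}')\to\operatorname{Spec}_\triangle(\mathcal{T})$, $\mathcal{P}\mapsto F^{-1}(\mathcal{P})$, is a homeomorphism.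
   Context: All subcategories are full and additive. $\operatorname{Th}(\mathcal{T})$ denotes the set of thick subcategories of $\mathcal{T}$, ordered by inclusion. A thick subcategory $\mathcal{P}$ of $\mathcal{T}$ is called prime if among all thick subcategories $\mathcal{X}$ of $\mathcal{T}$ with $\mathcal{P}\subsetneq\mathcal{X}$ there is a unique minimal one. $\operatorname{Spec}_\triangle(\mathcal{T})$ is the set of prime thick subcategories of $\mathcal{T}$, topologized by declaring the closed subsets to be the sets $\mathsf{Z}(\mathcal{E}) := \{\mathcal{P}\in\operatorname{Spec}_\triangle(\mathcal{T})\mid \mathcal{P}\cap\mathcal{E}=\emptyset\}$ for families $\mathcal{E}$ of objects of $\mathcal{T}$. *)

From HB Require Import structures.
From mathcomp Require Import all_boot all_algebra.
Set Implicit Arguments. Unset Strict Implicit. Unset Printing Implicit Defensive.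
Import GRing.Theory.
Local Open Scope ring_scope.

Record PreaddCat := {
  Ob :> Type;
  Mor : Ob -> Ob -> zmodType;
  mcomp : forall a b c : Ob, Mor b c -> Mor a b -> Mor a c;
  idm : forall a : Ob, Mor a a;
  compA : forall a b c d (h : Mor c d) (g : Mor b c) (f : Mor a b),
      mcomp h (mcomp g f) = mcomp (mcomp h g) f;
  comp1m : forall a b (f : Mor a b), mcomp (idm b) f = f;
  compm1 : forall a b (f : Mor a b), mcomp f (idm a) = f;
  compDl : forall a b c (g1 g2 : Mor b c) (f : Mor a b),
      mcomp (g1 + g2) f = mcomp g1 f + mcomp g2 f;
  compDr : forall a b c (g : Mor b c) (f1 f2 : Mor a b),
      mcomp g (f1 + f2) = mcomp g f1 + mcomp g f2
}.
Arguments Mor {p}.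
Arguments mcomp {p a b c}.
Arguments idm {p}.
Notation "g \o' f" := (mcomp g f) (at level 40, left associativity).

Section Basic.
Variable C : PreaddCat.

Definition is_iso (a b : C) (f : Mor a b) : Prop :=
  exists g : Mor b a, g \o' f = idm a /\ f \o' g = idm b.

(** zero object (in a preadditive category: identity is the zero map,
    equivalently initial and terminal) *)
Definition is_zero_obj (z : C) : Prop := idm z = 0.

Definition is_biprod (a b s : C) (i1 : Mor a s) (i2 : Mor b s)
    (p1 : Mor s a) (p2 : Mor s b) : Prop :=
  [/\ p1 \o' i1 = idm a, p2 \o' i2 = idm b, p2 \o' i1 = 0, p1 \o' i2 = 0
    & i1 \o' p1 + i2 \o' p2 = idm s].

Definition is_additive : Prop :=
  (exists z : C, is_zero_obj z) /\
  forall a b : C, exists (s : C) (i1 : Mor a s) (i2 : Mor b s)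
    (p1 : Mor s a) (p2 : Mor s b), is_biprod i1 i2 p1 p2.

Definition summand (N M : C) : Prop :=
  exists (N' : C) (i1 : Mor N M) (i2 : Mor N' M) (p1 : Mor M N) (p2 : Mor M N'),
    is_biprod i1 i2 p1 p2.
End Basic.

Section TriAxioms.
Variable C : PreaddCat.
Variable Sh : C -> C.
Variable shm : forall a b : C, Mor a b -> Mor (Sh a) (Sh b).
Variable dist : forall x y z : C, Mor x y -> Mor y z -> Mor z (Sh x) -> Prop.
Arguments shm {a b}.
Arguments dist {x y z}.

Definition shift_axioms : Prop :=
  [/\ (forall a b c (g : Mor b c) (f : Mor a b), shm (g \o' f) = shm g \o' shm f),
      (forall a, shm (idm a) = idm (Sh a)),
      (forall a b (f g : Mor a b), shm (f + g) = shm f + shm g),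
      (forall a b, bijective (@shm a b))
    & (forall b, exists a (f : Mor (Sh a) b), is_iso f)].

Definition TR1 : Prop :=
  [/\ (forall x z, is_zero_obj z -> dist (idm x) (0 : Mor x z) (0 : Mor z (Sh x))),
      (forall x y (f : Mor x y), exists z (g : Mor y z) (h : Mor z (Sh x)), dist f g h)
    & (forall x y z x' y' z' (f : Mor x y) (g : Mor y z) (h : Mor z (Sh x))
         (f' : Mor x' y') (g' : Mor y' z') (h' : Mor z' (Sh x'))
         (u : Mor x x') (v : Mor y y') (w : Mor z z'),
         dist f g h -> is_iso u -> is_iso v -> is_iso w ->
         v \o' f = f' \o' u -> w \o' g = g' \o' v -> shm u \o' h = h' \o' w ->
         dist f' g' h')].

Definition TR2 : Prop :=
  forall x y z (f : Mor x y) (g : Mor y z) (h : Mor z (Sh x)),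
    dist f g h <-> dist g h (- shm f).

Definition TR3 : Prop :=
  forall x y z x' y' z' (f : Mor x y) (g : Mor y z) (h : Mor z (Sh x))
     (f' : Mor x' y') (g' : Mor y' z') (h' : Mor z' (Sh x'))
     (u : Mor x x') (v : Mor y y'),
     dist f g h -> dist f' g' h' -> v \o' f = f' \o' u ->
     exists w : Mor z z', w \o' g = g' \o' v /\ shm u \o' h = h' \o' w.

Definition TR4 : Prop :=
  forall x y z z' x' y' (f : Mor x y) (g : Mor y z)
     (u : Mor y z') (h1 : Mor z' (Sh x))
     (v : Mor z x') (h2 : Mor x' (Sh y))
     (w : Mor z y') (h3 : Mor y' (Sh x)),
     dist f u h1 -> dist g v h2 -> dist (g \o' f) w h3 ->
     exists (a : Mor z' y') (b : Mor y' x'),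
       [/\ dist a b (shm u \o' h2), a \o' u = w \o' g, h3 \o' a = h1,
           b \o' w = v & h2 \o' b = shm f \o' h3].
End TriAxioms.

Record TriCat := {
  tcat :> PreaddCat;
  tcat_additive : is_additive tcat;
  Sh : tcat -> tcat;
  shm : forall a b : tcat, Mor a b -> Mor (Sh a) (Sh b);
  dist : forall x y z : tcat, Mor x y -> Mor y z -> Mor z (Sh x) -> Prop;
  tcat_shift : shift_axioms shm;
  tcat_TR1 : TR1 shm dist;
  tcat_TR2 : TR2 shm dist;
  tcat_TR3 : TR3 shm dist;
  tcat_TR4 : TR4 shm dist
}.
Arguments Sh {t}.
Arguments shm {t a b}.
Arguments dist {t x y z}.

Definition exact_functor (T T' : TriCat) (F0 : T -> T')
    (F1 : forall a b : T, Mor a b -> Mor (F0 a) (F0 b)) : Prop :=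
  [/\ (forall a b c (g : Mor b c) (f : Mor a b), F1 _ _ (g \o' f) = F1 _ _ g \o' F1 _ _ f),
      (forall a, F1 _ _ (idm a) = idm (F0 a)),
      (forall a b (f g : Mor a b), F1 _ _ (f + g) = F1 _ _ f + F1 _ _ g)
    & exists phi : forall a : T, Mor (F0 (Sh a)) (Sh (F0 a)),
        [/\ (forall a, is_iso (phi a)),
            (forall a b (f : Mor a b), phi b \o' F1 _ _ (shm f) = shm (F1 _ _ f) \o' phi a)
          & (forall x y z (f : Mor x y) (g : Mor y z) (h : Mor z (Sh x)),
               dist f g h -> dist (F1 _ _ f) (F1 _ _ g) (phi x \o' F1 _ _ h))]].

Definition fully_faithful (T T' : TriCat) (F0 : T -> T')
    (F1 : forall a b : T, Mor a b -> Mor (F0 a) (F0 b)) : Prop :=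
  forall a b : T, bijective (F1 a b).

(** * Thick subcategories (full subcategories given by their objects) *)
Definition subcat (T : TriCat) := T -> Prop.

Definition thick (T : TriCat) (X : subcat T) : Prop :=
  [/\ (exists z : T, is_zero_obj z /\ X z),
      (forall a b (f : Mor a b), is_iso f -> X a -> X b),
      (forall a, X a <-> X (Sh a)),
      (forall x y z (f : Mor x y) (g : Mor y z) (h : Mor z (Sh x)), dist f g h ->
          [/\ (X x -> X y -> X z), (X y -> X z -> X x) & (X x -> X z -> X y)])
    & (forall N M : T, summand N M -> X M -> X N)].

Definition subcat_le (T : TriCat) (X Y : subcat T) : Prop := forall M, X M -> Y M.

Definition strict_sub (T : TriCat) (X Y : subcat T) : Prop :=
  subcat_le X Y /\ ~ subcat_le Y X.

Definition minimal_over (T : TriCat) (P X : subcat T) : Prop :=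
  [/\ thick X, strict_sub P X &
      forall X', thick X' -> strict_sub P X' -> subcat_le X' X -> X' = X].

Definition prime_thick (T : TriCat) (P : subcat T) : Prop :=
  thick P /\ exists X, minimal_over P X /\ forall X', minimal_over P X' -> X' = X.

Definition Spec (T : TriCat) : Type := {P : subcat T | prime_thick P}.

(** closed subsets of Spec T: Z(E) = {P | P ∩ E = ∅} for families E of objects *)
Definition Zset (T : TriCat) (E : subcat T) : Spec T -> Prop :=
  fun P => forall M, proj1_sig P M -> ~ E M.

Definition closedSpec (T : TriCat) (S : Spec T -> Prop) : Prop :=
  exists E : subcat T, forall P, S P <-> Zset E P.

Definition thick_preimage (T T' : TriCat) (F0 : T -> T') (Y : subcat T') : subcat T :=
  fun M => Y (F0 M).

From Pilot Require Import Defs.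
From mathcomp Require Import all_boot all_algebra.
From Stdlib Require Import FunctionalExtensionality PropExtensionality ProofIrrelevance.
Set Implicit Arguments. Unset Strict Implicit. Unset Printing Implicit Defensive.
Import GRing.Theory.
Local Open Scope ring_scope.

(* The cone of a split monomorphism is a complement, so retracts are direct
   summands and thick subcategories are closed under retracts. As F is fully
   faithful, the retracts of the objects F M with M in a thick X form a thick
   subcategory of T' whose preimage is X. Conversely every N in T' is a retract
   of some F M lying in the thick closure of N: if N (+) N' = F M0, let M be the
   cone of the lift of the idempotent onto N'; by the octahedral axiom
   F M = N (+) Sh N. Hence Y |-> F^-1(Y) is an order isomorphism between the
   lattices of thick subcategories, primality is preserved and reflected since
   it is order-theoretic, and on spectra F^-1 carries Z(E) to Z(F E) while its
   inverse carries Z(E) to Z({M | some N in E is a retract of F M}). *)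

(* [ssrfun.compA] would otherwise shadow the associativity of composition. *)
Notation compA := Defs.compA.

Section Preadditive.
Variable C : PreaddCat.
Implicit Types a b c : C.

Lemma comp0l a b c (f : Mor a b) : (0 : Mor b c) \o' f = 0.
Proof. by apply: (addrI ((0 : Mor b c) \o' f)); rewrite -compDl !addr0. Qed.

Lemma comp0r a b c (g : Mor b c) : g \o' (0 : Mor a b) = 0.
Proof. by apply: (addrI (g \o' (0 : Mor a b))); rewrite -compDr !addr0. Qed.

Lemma compNl a b c (g : Mor b c) (f : Mor a b) : (- g) \o' f = - (g \o' f).
Proof. by apply: (addrI (g \o' f)); rewrite -compDl !subrr comp0l. Qed.

Lemma compNr a b c (g : Mor b c) (f : Mor a b) : g \o' (- f) = - (g \o' f).
Proof. by apply: (addrI (g \o' f)); rewrite -compDr !subrr comp0r. Qed.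

Lemma compBl a b c (g1 g2 : Mor b c) (f : Mor a b) :
  (g1 - g2) \o' f = g1 \o' f - g2 \o' f.
Proof. by rewrite compDl compNl. Qed.

Lemma compBr a b c (g : Mor b c) (f1 f2 : Mor a b) :
  g \o' (f1 - f2) = g \o' f1 - g \o' f2.
Proof. by rewrite compDr compNr. Qed.

Definition retract a b := exists (i : Mor a b) (p : Mor b a), p \o' i = idm a.

Lemma retract_refl a : retract a a.
Proof. by exists (idm a), (idm a); rewrite comp1m. Qed.

Lemma retract_trans a b c : retract a b -> retract b c -> retract a c.
Proof.
move=> [i [p pi]] [j [q qj]]; exists (j \o' i), (p \o' q).
by rewrite -compA (compA q j i) qj comp1m pi.
Qed.

Lemma iso_retract a b (f : Mor a b) : is_iso f -> retract a b.
Proof. by move=> [g [gf _]]; exists f, g. Qed.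

Lemma iso_retract_inv a b (f : Mor a b) : is_iso f -> retract b a.
Proof. by move=> [g [_ fg]]; exists g, f. Qed.

Lemma is_iso_sym a b (f : Mor a b) : is_iso f -> exists g : Mor b a, is_iso g.
Proof. by move=> [g [gf fg]]; exists g, f. Qed.

Lemma summand_retract a b : summand a b -> retract a b.
Proof. by move=> [N' [i1 [i2 [p1 [p2 [p1i1 _ _ _ _]]]]]]; exists i1, p1. Qed.

Lemma is_biprod_sym a b s (i1 : Mor a s) (i2 : Mor b s) p1 p2 :
  is_biprod i1 i2 p1 p2 -> is_biprod i2 i1 p2 p1.
Proof. by move=> [E1 E2 E3 E4 E5]; split => //; rewrite addrC. Qed.

Lemma is_iso_zero_obj a b : is_zero_obj a -> is_zero_obj b -> is_iso (0 : Mor a b).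
Proof. by rewrite /is_zero_obj => za zb; exists 0; rewrite !comp0l za zb. Qed.

End Preadditive.

Section Triangulated.
Variable T : TriCat.

Lemma shm_comp (a b c : T) (g : Mor b c) (f : Mor a b) :
  shm (g \o' f) = shm g \o' shm f.
Proof. by case: (tcat_shift T) => H _ _ _ _; apply: H. Qed.

Lemma shm_id (a : T) : shm (idm a) = idm (Sh a).
Proof. by case: (tcat_shift T) => _ H _ _ _; apply: H. Qed.

Lemma shmD (a b : T) (f g : Mor a b) : shm (f + g) = shm f + shm g.
Proof. by case: (tcat_shift T) => _ _ H _ _; apply: H. Qed.

Lemma shm0 (a b : T) : shm (0 : Mor a b) = 0.
Proof. by apply: (addrI (shm (0 : Mor a b))); rewrite -shmD !addr0. Qed.

Lemma shm_bij (a b : T) : bijective (@shm T a b).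
Proof. by case: (tcat_shift T) => _ _ _ H _; apply: H. Qed.

Lemma shm_inj (a b : T) (f g : Mor a b) : shm f = shm g -> f = g.
Proof. exact: (bij_inj (shm_bij a b)). Qed.

Lemma shm_surj (a b : T) (g : Mor (Sh a) (Sh b)) : exists f, shm f = g.
Proof. by case: (shm_bij a b) => k _ shmK; exists (k g). Qed.

Lemma Sh_ess_surj (b : T) : exists a (f : Mor (Sh a) b), is_iso f.
Proof. by case: (tcat_shift T) => _ _ _ _ H; apply: H. Qed.

Lemma exists_zero_obj : exists z : T, is_zero_obj z.
Proof. by case: (tcat_additive T) => [[z zz] _]; exists z. Qed.

Lemma dist_id (x z : T) :
  is_zero_obj z -> dist (idm x) (0 : Mor x z) (0 : Mor z (Sh x)).
Proof. by case: (tcat_TR1 T) => H _ _; apply: H. Qed.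

Lemma dist_cone (x y : T) (f : Mor x y) :
  exists z (g : Mor y z) (h : Mor z (Sh x)), dist f g h.
Proof. by case: (tcat_TR1 T) => _ H _; apply: H. Qed.

Lemma dist_iso (x y z x' y' z' : T) (f : Mor x y) (g : Mor y z) (h : Mor z (Sh x))
    (f' : Mor x' y') (g' : Mor y' z') (h' : Mor z' (Sh x'))
    (u : Mor x x') (v : Mor y y') (w : Mor z z') :
  dist f g h -> is_iso u -> is_iso v -> is_iso w ->
  v \o' f = f' \o' u -> w \o' g = g' \o' v -> shm u \o' h = h' \o' w ->
  dist f' g' h'.
Proof. by case: (tcat_TR1 T) => _ _ H; apply: H. Qed.

Lemma dist_rot (x y z : T) (f : Mor x y) (g : Mor y z) (h : Mor z (Sh x)) :
  dist f g h <-> dist g h (- shm f).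
Proof. exact: tcat_TR2. Qed.

Lemma dist_morph (x y z x' y' z' : T) (f : Mor x y) (g : Mor y z) (h : Mor z (Sh x))
    (f' : Mor x' y') (g' : Mor y' z') (h' : Mor z' (Sh x'))
    (u : Mor x x') (v : Mor y y') :
  dist f g h -> dist f' g' h' -> v \o' f = f' \o' u ->
  exists w : Mor z z', w \o' g = g' \o' v /\ shm u \o' h = h' \o' w.
Proof. exact: tcat_TR3. Qed.

Lemma octahedral (x y z z' x' y' : T) (f : Mor x y) (g : Mor y z)
    (u : Mor y z') (h1 : Mor z' (Sh x)) (v : Mor z x') (h2 : Mor x' (Sh y))
    (w : Mor z y') (h3 : Mor y' (Sh x)) :
  dist f u h1 -> dist g v h2 -> dist (g \o' f) w h3 ->
  exists (a : Mor z' y') (b : Mor y' x'),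
    [/\ dist a b (shm u \o' h2), a \o' u = w \o' g, h3 \o' a = h1,
        b \o' w = v & h2 \o' b = shm f \o' h3].
Proof. exact: tcat_TR4. Qed.

Lemma dist_comp0 (x y z : T) (f : Mor x y) (g : Mor y z) (h : Mor z (Sh x)) :
  dist f g h -> g \o' f = 0.
Proof.
move=> D; have [z0 z0_0] := exists_zero_obj.
have [w [wg _]] := dist_morph (dist_id x z0_0) D (erefl (f \o' idm x)).
by rewrite comp0r in wg.
Qed.

Lemma dist_factor (x y z : T) (f : Mor x y) (g : Mor y z) (h : Mor z (Sh x))
    (A : T) (c : Mor A y) :
  dist f g h -> g \o' c = 0 -> exists b : Mor A x, c = f \o' b.
Proof.
move=> D gc0; have [z0 z0_0] := exists_zero_obj.
have D0 := dist_id A z0_0; move/dist_rot: D0 => D0; move/dist_rot: D => D.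
have sq : (0 : Mor z0 z) \o' 0 = g \o' c by rewrite comp0l gc0.
have [w [_ hw]] := dist_morph D0 D sq.
move: hw; rewrite compNr shm_id compm1 compNl => /oppr_inj hw.
have [b shm_b] := shm_surj w; exists b; apply: shm_inj.
by rewrite shm_comp shm_b.
Qed.

Lemma dist0_mono (x y z : T) (f : Mor x y) (g : Mor y z) (A : T) (a : Mor A x) :
  dist f g (0 : Mor z (Sh x)) -> f \o' a = 0 -> a = 0.
Proof.
move=> /dist_rot/dist_rot D fa0.
have : (- shm f) \o' shm a = 0 by rewrite compNl -shm_comp fa0 shm0 oppr0.
move=> /(dist_factor D) [b shm_a]; apply: shm_inj.
by rewrite shm_a comp0l shm0.
Qed.

Lemma dist0_biprod (x y z : T) (f : Mor x y) (g : Mor y z) :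
  dist f g (0 : Mor z (Sh x)) -> exists (s : Mor z y) (r : Mor y x), is_biprod f s r g.
Proof.
move=> D; have gf0 := dist_comp0 D.
have [s gs] : exists s : Mor z y, idm z = g \o' s.
  by apply: (dist_factor (proj1 (dist_rot _ _ _) D)); rewrite comp0l.
have [r fr] : exists r : Mor y x, idm y - s \o' g = f \o' r.
  by apply: (dist_factor D); rewrite compBr compm1 compA -gs comp1m subrr.
have rf : r \o' f = idm x.
  apply/eqP; rewrite -subr_eq0; apply/eqP; apply: (dist0_mono D).
  by rewrite compBr compA -fr compBl comp1m compm1 -compA gf0 comp0r subr0 subrr.
have rs : r \o' s = 0.
  by apply: (dist0_mono D); rewrite compA -fr compBl comp1m -compA -gs compm1 subrr.
by exists s, r; split => //; rewrite -fr subrK.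
Qed.

Lemma dist_split_mono0 (x y z : T) (i : Mor x y) (g : Mor y z) (h : Mor z (Sh x))
    (p : Mor y x) :
  dist i g h -> p \o' i = idm x -> h = 0.
Proof.
move=> /dist_rot/dist_rot/dist_comp0; rewrite compNl => /eqP.
rewrite oppr_eq0 => /eqP shi_h0 pi.
by rewrite -(comp1m h) -shm_id -pi shm_comp -compA shi_h0 comp0r.
Qed.

Lemma retract_summand (a m : T) : retract a m -> summand a m.
Proof.
move=> [i [p pi]]; have [z [g [h D]]] := dist_cone i.
have h0 := dist_split_mono0 D pi; subst h.
by have [s [r B]] := dist0_biprod D; exists z, i, s, r, g.
Qed.

Lemma biprod_dist (a b s : T) (i1 : Mor a s) (i2 : Mor b s) p1 p2 :
  is_biprod i1 i2 p1 p2 -> dist i1 p2 (0 : Mor b (Sh a)).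
Proof.
move=> [p1i1 p2i2 p2i1 _ sum_id].
have [z [g [h D]]] := dist_cone i1.
have h0 := dist_split_mono0 D p1i1; subst h.
have [s' [r [_ gs' _ _ sum_id']]] := dist0_biprod D.
have gi1 := dist_comp0 D.
have i2p2 : i2 \o' p2 = idm s - i1 \o' p1 by rewrite -sum_id addrAC subrr add0r.
have s'g : s' \o' g = idm s - i1 \o' r by rewrite -sum_id' addrAC subrr add0r.
have id_iso (c : T) : is_iso (idm c) by exists (idm c); rewrite comp1m.
have w_iso : is_iso (p2 \o' s').
  exists (g \o' i2); split.
    have -> : (g \o' i2) \o' (p2 \o' s') = g \o' ((i2 \o' p2) \o' s') by rewrite !compA.
    by rewrite i2p2 compBl comp1m compBr !compA gi1 !comp0l subr0 gs'.
  have -> : (p2 \o' s') \o' (g \o' i2) = p2 \o' ((s' \o' g) \o' i2) by rewrite !compA.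
  by rewrite s'g compBl comp1m compBr !compA p2i1 !comp0l subr0 p2i2.
apply: (dist_iso D (id_iso a) (id_iso s) w_iso).
- by rewrite comp1m compm1.
- by rewrite -compA s'g compBr !compm1 compA p2i1 comp0l subr0.
- by rewrite comp0l comp0r.
Qed.

Lemma dist0_retract (x y z : T) (f : Mor x y) (g : Mor y z) :
  dist f g (0 : Mor z (Sh x)) -> retract z y.
Proof. by move=> /dist0_biprod [s [r [_ gs _ _ _]]]; exists s, g. Qed.

(* The octahedron on [i2 \o' p2] with the split triangles of [p2] and [i2]. *)
Lemma cone_idempotent (N N' S W : T) (i1 : Mor N S) (i2 : Mor N' S) p1 p2
    (w : Mor S W) (h : Mor W (Sh S)) :
  is_biprod i1 i2 p1 p2 -> dist (i2 \o' p2) w h ->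
  exists (a : Mor (Sh N) W) (b : Mor W N), dist a b 0.
Proof.
move=> B D; have /dist_rot Dp2 := biprod_dist B.
have Di2 := biprod_dist (is_biprod_sym B).
have [a [b [Dab _ _ _ _]]] := octahedral Dp2 Di2 D.
by exists a, b; rewrite comp0r in Dab.
Qed.

(* Two octahedra: the cone V of [f \o' q1] is [N3 (+) Sh N1'], and W is
   [V (+) N2']. *)
Lemma cone_retract (N1 N2 N3 S1 S2 N1' N2' W : T) (f : Mor N1 N2) (g : Mor N2 N3)
    (h : Mor N3 (Sh N1)) (j1 : Mor N1 S1) (j1' : Mor N1' S1) q1 q1'
    (j2 : Mor N2 S2) (j2' : Mor N2' S2) q2 q2' (w : Mor S2 W) (h' : Mor W (Sh S1)) :
  dist f g h -> is_biprod j1 j1' q1 q1' -> is_biprod j2 j2' q2 q2' ->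
  dist (j2 \o' (f \o' q1)) w h' -> retract N3 W.
Proof.
move=> Df B1 B2 D.
have /dist_rot Dq1 := biprod_dist (is_biprod_sym B1).
have [V [w1 [h1 D1]]] := dist_cone (f \o' q1).
have [a [b [Dab _ _ _ _]]] := octahedral Dq1 Df D1.
have [a' [b' [Dab' _ _ _ _]]] := octahedral D1 (biprod_dist B2) D.
rewrite shm0 comp0l in Dab; rewrite comp0r in Dab'.
apply: (retract_trans (b := V)); first exact: dist0_retract Dab.
by have [s [r [ra' _ _ _ _]]] := dist0_biprod Dab'; exists a', r.
Qed.

Lemma retract_Sh (a b : T) : retract a b <-> retract (Sh a) (Sh b).
Proof.
split=> [[i [p pi]] | [i [p pi]]].
  by exists (shm i), (shm p); rewrite -shm_comp pi shm_id.
have [i0 shm_i0] := shm_surj i; have [p0 shm_p0] := shm_surj p.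
by exists i0, p0; apply: shm_inj; rewrite shm_comp shm_i0 shm_p0 pi shm_id.
Qed.

End Triangulated.

Section Thick.
Variables (T : TriCat) (Y : subcat T).
Hypothesis thickY : thick Y.

Lemma thick_zero_obj (z : T) : is_zero_obj z -> Y z.
Proof.
case: (thickY) => [[z' [z'0 Yz']] iso _ _ _] z0.
exact: iso _ _ _ (is_iso_zero_obj z'0 z0) Yz'.
Qed.

Lemma thick_iso (a b : T) (f : Mor a b) : is_iso f -> Y a -> Y b.
Proof. by case: thickY => _ H _ _ _; apply: H. Qed.

Lemma thick_Sh (a : T) : Y a <-> Y (Sh a).
Proof. by case: thickY => _ _ H _ _; apply: H. Qed.

Lemma thick_dist (x y z : T) (f : Mor x y) (g : Mor y z) (h : Mor z (Sh x)) :
  dist f g h -> [/\ (Y x -> Y y -> Y z), (Y y -> Y z -> Y x) & (Y x -> Y z -> Y y)].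
Proof. by case: thickY => _ _ _ H _; apply: H. Qed.

Lemma thick_retract (N M : T) : retract N M -> Y M -> Y N.
Proof. by case: thickY => _ _ _ _ H /retract_summand; apply: H. Qed.

End Thick.

Lemma Spec_eq (T : TriCat) (P Q : Spec T) : proj1_sig P = proj1_sig Q -> P = Q.
Proof.
by case: P Q => [P p] [Q q] /= PQ; subst Q; congr exist; apply: proof_irrelevance.
Qed.

Section Functor.
Variables (T T' : TriCat) (F0 : T -> T') (F1 : forall a b : T, Mor a b -> Mor (F0 a) (F0 b)).
Hypothesis F_exact : exact_functor F1.
Hypothesis F_ff : fully_faithful F1.
Hypothesis F_dense : forall N : T', exists M : T, summand N (F0 M).

Local Notation preimage := (thick_preimage F0).

Lemma F1_comp (a b c : T) (g : Mor b c) (f : Mor a b) : F1 (g \o' f) = F1 g \o' F1 f.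
Proof. by case: F_exact => H _ _ _; apply: H. Qed.

Lemma F1_id (a : T) : F1 (idm a) = idm (F0 a).
Proof. by case: F_exact => _ H _ _; apply: H. Qed.

Lemma F1D (a b : T) (f g : Mor a b) : F1 (f + g) = F1 f + F1 g.
Proof. by case: F_exact => _ _ H _; apply: H. Qed.

Lemma F1_0 (a b : T) : F1 (0 : Mor a b) = 0.
Proof. by apply: (addrI (F1 (0 : Mor a b))); rewrite -F1D !addr0. Qed.

Lemma F0_Sh_iso (a : T) : exists f : Mor (F0 (Sh a)) (Sh (F0 a)), is_iso f.
Proof. by case: F_exact => _ _ _ [phi [phi_iso _ _]]; exists (phi a). Qed.

Lemma F1_dist (x y z : T) (f : Mor x y) (g : Mor y z) (h : Mor z (Sh x)) :
  dist f g h -> exists h' : Mor (F0 z) (Sh (F0 x)), dist (F1 f) (F1 g) h'.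
Proof.
by case: F_exact => _ _ _ [phi [_ _ F1_dist]] /F1_dist D; exists (phi x \o' F1 h).
Qed.

Lemma F1_inj (a b : T) (f g : Mor a b) : F1 f = F1 g -> f = g.
Proof. exact: (bij_inj (F_ff a b)). Qed.

Lemma F1_surj (a b : T) (g : Mor (F0 a) (F0 b)) : exists f, F1 f = g.
Proof. by case: (F_ff a b) => k _ F1K; exists (k g). Qed.

Lemma F1_iso (a b : T) (f : Mor a b) : is_iso f -> is_iso (F1 f).
Proof. by move=> [g [gf fg]]; exists (F1 g); rewrite -!F1_comp gf fg !F1_id. Qed.

Lemma zero_obj_F0 (z : T) : is_zero_obj z -> is_zero_obj (F0 z).
Proof. by rewrite /is_zero_obj -F1_id => ->; rewrite F1_0. Qed.

Lemma retract_F0 (a b : T) : retract a b <-> retract (F0 a) (F0 b).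
Proof.
split=> [[i [p pi]] | [i [p pi]]].
  by exists (F1 i), (F1 p); rewrite -F1_comp pi F1_id.
have [i0 F1_i0] := F1_surj i; have [p0 F1_p0] := F1_surj p.
by exists i0, p0; apply: F1_inj; rewrite F1_comp F1_i0 F1_p0 pi F1_id.
Qed.

Lemma thick_preimage_thick (Y : subcat T') : thick Y -> thick (preimage Y).
Proof.
move=> thickY; split.
- have [z z0] := exists_zero_obj T; exists z; split => //.
  exact: (thick_zero_obj thickY (zero_obj_F0 z0)).
- by move=> a b f /F1_iso /(thick_iso thickY).
- move=> a; rewrite /thick_preimage (thick_Sh thickY).
  have [f f_iso] := F0_Sh_iso a; have [g g_iso] := is_iso_sym f_iso.
  by split; [apply: (thick_iso thickY g_iso) | apply: (thick_iso thickY f_iso)].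
- by move=> x y z f g h /F1_dist [h' /(thick_dist thickY)].
- by move=> N M /summand_retract/retract_F0 /(thick_retract thickY).
Qed.

Lemma retract_F0_thick_closure (N : T') : exists M : T,
  retract N (F0 M) /\ forall Y : subcat T', thick Y -> Y N -> Y (F0 M).
Proof.
have [M0 [N' [i1 [i2 [p1 [p2 B]]]]]] := F_dense N.
have [e F1e] := F1_surj (i2 \o' p2).
have [M [g [h D]]] := dist_cone e.
have [h' FD] := F1_dist D; rewrite F1e in FD.
have [a [b Dab]] := cone_idempotent B FD.
exists M; split; first exact: dist0_retract Dab.
move=> Y thickY YN; have [_ _ YFM] := thick_dist thickY Dab.
by apply: YFM => //; rewrite -(thick_Sh thickY).
Qed.

Lemma thick_preimage_le (Y1 Y2 : subcat T') : thick Y1 -> thick Y2 ->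
  subcat_le Y1 Y2 <-> subcat_le (preimage Y1) (preimage Y2).
Proof.
move=> thickY1 thickY2; split=> [le12 M | le12 N Y1N]; first exact: le12.
have [M [NFM FM_closure]] := retract_F0_thick_closure N.
exact: (thick_retract thickY2 NFM (le12 M (FM_closure Y1 thickY1 Y1N))).
Qed.

Lemma thick_preimage_inj (Y1 Y2 : subcat T') : thick Y1 -> thick Y2 ->
  preimage Y1 = preimage Y2 -> Y1 = Y2.
Proof.
move=> thickY1 thickY2 eqY; apply: functional_extensionality => N.
apply: propositional_extensionality; split; apply: (thick_preimage_le _ _).2 => //;
  by rewrite eqY.
Qed.

Definition retract_image (X : subcat T) : subcat T' :=
  fun N => exists M, X M /\ retract N (F0 M).

Section RetractImage.
Variable X : subcat T.
Hypothesis thickX : thick X.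

Lemma retract_image_dist (N1 N2 N3 : T') (f : Mor N1 N2) (g : Mor N2 N3)
    (h : Mor N3 (Sh N1)) :
  dist f g h -> retract_image X N1 -> retract_image X N2 -> retract_image X N3.
Proof.
move=> Df [M1 [X1 /retract_summand [N1' [j1 [j1' [q1 [q1' B1]]]]]]]
          [M2 [X2 /retract_summand [N2' [j2 [j2' [q2 [q2' B2]]]]]]].
have [e F1e] := F1_surj (j2 \o' (f \o' q1)).
have [M [g0 [h0 D]]] := dist_cone e.
have [XM _ _] := thick_dist thickX D; exists M; split; first exact: XM.
by have [h'] := F1_dist D; rewrite F1e; apply: cone_retract Df B1 B2.
Qed.

Lemma retract_image_Sh (N : T') : retract_image X N <-> retract_image X (Sh N).
Proof.
split=> [[M [XM /retract_Sh NM]] | [M [XM NM]]].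
  exists (Sh M); split; first by rewrite -thick_Sh.
  by have [f f_iso] := F0_Sh_iso M; apply: (retract_trans NM (iso_retract_inv f_iso)).
have [M' [k k_iso]] := Sh_ess_surj M; have [k' k'_iso] := is_iso_sym k_iso.
exists M'; split; first by rewrite (thick_Sh thickX); apply: (thick_iso thickX k'_iso XM).
apply/retract_Sh; apply: (retract_trans NM).
apply: (retract_trans (iso_retract_inv (F1_iso k_iso))).
by have [f f_iso] := F0_Sh_iso M'; apply: (iso_retract f_iso).
Qed.

Lemma retract_image_thick : thick (retract_image X).
Proof.
split.
- have [z z0] := exists_zero_obj T; exists (F0 z); split; first exact: zero_obj_F0.
  by exists z; split; [apply: (thick_zero_obj thickX z0) | apply: retract_refl].
- move=> a b f f_iso [M [XM aM]]; exists M; split => //.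
  exact: retract_trans (iso_retract_inv f_iso) aM.
- exact: retract_image_Sh.
- move=> x y z f g h D; split; first exact: retract_image_dist D.
  + move=> Py Pz; apply/retract_image_Sh.
    exact: (retract_image_dist (proj1 (dist_rot _ _ _) D) Py Pz).
  + move=> Px Pz; apply/retract_image_Sh; move/dist_rot/dist_rot: D => D.
    by apply: (retract_image_dist D Pz); rewrite -retract_image_Sh.
- move=> N M /summand_retract NM [M' [XM' MM']]; exists M'; split => //.
  exact: retract_trans NM MM'.
Qed.

Lemma thick_preimage_retract_image : preimage (retract_image X) = X.
Proof.
apply: functional_extensionality => M; apply: propositional_extensionality.
split=> [[M' [XM' /retract_F0 MM']] | XM]; first exact: (thick_retract thickX MM' XM').
by exists M; split => //; apply: retract_refl.
Qed.

End RetractImage.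

Lemma strict_sub_preimage (Y1 Y2 : subcat T') : thick Y1 -> thick Y2 ->
  strict_sub Y1 Y2 <-> strict_sub (preimage Y1) (preimage Y2).
Proof.
move=> thickY1 thickY2.
by rewrite /strict_sub (thick_preimage_le thickY1 thickY2) (thick_preimage_le thickY2 thickY1).
Qed.

Lemma minimal_over_preimage (Q Y : subcat T') : thick Q -> thick Y ->
  minimal_over Q Y <-> minimal_over (preimage Q) (preimage Y).
Proof.
move=> thickQ thickY; split=> [[_ QY minY] | [_ QY minY]].
  split; [exact: thick_preimage_thick | by rewrite -strict_sub_preimage |].
  move=> X thickX; rewrite -(thick_preimage_retract_image thickX) => QX XY.
  have thickIX := retract_image_thick thickX.
  rewrite (minY _ thickIX) ?strict_sub_preimage //.
  exact: (thick_preimage_le thickIX thickY).2.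
split; [by [] | by rewrite strict_sub_preimage |].
move=> Y' thickY' QY' Y'Y; apply: thick_preimage_inj => //.
apply: minY; first exact: thick_preimage_thick.
  by rewrite -strict_sub_preimage.
by rewrite -thick_preimage_le.
Qed.

Lemma prime_thick_preimage (Q : subcat T') : thick Q ->
  prime_thick Q <-> prime_thick (preimage Q).
Proof.
move=> thickQ; split=> [[_ [Y [minY uniqY]]] | [_ [X [minX uniqX]]]].
  have thickY : thick Y by case: minY.
  split; first exact: thick_preimage_thick.
  exists (preimage Y); split; first by rewrite -minimal_over_preimage.
  move=> X minX; have thickX : thick X by case: minX.
  rewrite -(thick_preimage_retract_image thickX) in minX *.
  by rewrite (uniqY _ ((minimal_over_preimage _ (retract_image_thick thickX)).2 minX)).
have thickX : thick X by case: minX.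
have thickIX := retract_image_thick thickX.
split => //; exists (retract_image X); split.
  by rewrite (minimal_over_preimage thickQ thickIX) thick_preimage_retract_image.
move=> Y minY; have thickY : thick Y by case: minY.
apply: thick_preimage_inj => //; rewrite thick_preimage_retract_image //.
by apply: uniqX; rewrite -minimal_over_preimage.
Qed.

Lemma spec_preimage_prime (P : Spec T') : prime_thick (preimage (proj1_sig P)).
Proof. by case: P => P primeP; rewrite -prime_thick_preimage //; case: primeP. Qed.

Lemma spec_retract_image_prime (P : Spec T) : prime_thick (retract_image (proj1_sig P)).
Proof.
case: P => P primeP /=; have [thickP _] := primeP.
by rewrite prime_thick_preimage ?thick_preimage_retract_image //; apply: retract_image_thick.
Qed.

Definition spec_preimage (P : Spec T') : Spec T :=
  exist _ (preimage (proj1_sig P)) (spec_preimage_prime P).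

Definition spec_retract_image (P : Spec T) : Spec T' :=
  exist _ (retract_image (proj1_sig P)) (spec_retract_image_prime P).

Lemma spec_preimageK : cancel spec_preimage spec_retract_image.
Proof.
move=> [P [thickP ?]]; apply: Spec_eq => /=.
have thickFP := thick_preimage_thick thickP.
apply: thick_preimage_inj => //; first exact: retract_image_thick.
by rewrite thick_preimage_retract_image.
Qed.

Lemma spec_retract_imageK : cancel spec_retract_image spec_preimage.
Proof.
by move=> [P [thickP ?]]; apply: Spec_eq; rewrite /= thick_preimage_retract_image.
Qed.

Lemma closedSpec_preimage (S : Spec T -> Prop) :
  closedSpec S -> closedSpec (fun P => S (spec_preimage P)).
Proof.
move=> [E SE]; exists (fun N => exists M, E M /\ N = F0 M) => P.
rewrite SE /Zset /=; split=> [PE N PN [M [EM NM]] | PE M PM EM].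
  by subst N; apply: PE PN EM.
by apply: PE PM _; exists M.
Qed.

Lemma closedSpec_image (S : Spec T' -> Prop) :
  closedSpec S -> closedSpec (fun Q => exists P, S P /\ spec_preimage P = Q).
Proof.
move=> [E SE]; exists (fun M => exists N, E N /\ retract N (F0 M)) => Q.
have -> : (exists P, S P /\ spec_preimage P = Q) <-> S (spec_retract_image Q).
  split=> [[P [SP <-]] | SQ]; first by rewrite spec_preimageK.
  by exists (spec_retract_image Q); rewrite spec_retract_imageK.
rewrite SE /Zset /=; split=> [QE M QM [N [EN NM]] | QE N [M [QM NM]] EN].
  by apply: QE EN; exists M.
by apply: QE QM _; exists N.
Qed.

End Functor.

Theorem proposition2p11 (T T' : TriCat) (F0 : T -> T')
    (F1 : forall a b : T, Mor a b -> Mor (F0 a) (F0 b)) :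
  exact_functor F1 -> fully_faithful F1 ->
  (forall N : T', exists M : T, summand N (F0 M)) ->
  (* (1) Y |-> F^{-1}(Y) is a lattice (= order) isomorphism Th(T') -> Th(T) *)
  [/\ (forall Y : subcat T', thick Y -> thick (thick_preimage F0 Y)),
      (forall Y1 Y2 : subcat T', thick Y1 -> thick Y2 ->
          (subcat_le Y1 Y2 <-> subcat_le (thick_preimage F0 Y1) (thick_preimage F0 Y2))),
      (forall Y1 Y2 : subcat T', thick Y1 -> thick Y2 ->
          thick_preimage F0 Y1 = thick_preimage F0 Y2 -> Y1 = Y2)
    & (forall X : subcat T, thick X -> exists Y : subcat T', thick Y /\ thick_preimage F0 Y = X)]
  /\
  (* (2) *)
  (forall Q : subcat T', thick Q -> (prime_thick Q <-> prime_thick (thick_preimage F0 Q)))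
  /\
  (* (3) aF : Spec T' -> Spec T, P |-> F^{-1}(P), is a homeomorphism *)
  (exists aF : Spec T' -> Spec T,
     [/\ (forall P, proj1_sig (aF P) = thick_preimage F0 (proj1_sig P)),
         bijective aF,
         (forall S : Spec T -> Prop, closedSpec S -> closedSpec (fun P => S (aF P)))
       & (forall S : Spec T' -> Prop, closedSpec S ->
            closedSpec (fun Q => exists P, S P /\ aF P = Q))]).
Proof.
move=> F_exact F_ff F_dense.
split; [split | split].
- by move=> Y; apply: (thick_preimage_thick F_exact).
- by move=> Y1 Y2; apply: (thick_preimage_le F_exact F_ff F_dense).
- by move=> Y1 Y2; apply: (thick_preimage_inj F_exact F_ff F_dense).
- move=> X thickX; exists (retract_image F0 X).
  split; first exact: (retract_image_thick F_exact F_ff thickX).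
  exact: (thick_preimage_retract_image F_exact F_ff thickX).
- by move=> Q; apply: (prime_thick_preimage F_exact F_ff F_dense).
exists (spec_preimage F_exact F_ff F_dense); split => //.
- exists (spec_retract_image F_exact F_ff F_dense).
    exact: spec_preimageK.
  exact: spec_retract_imageK.
- by move=> S; apply: (closedSpec_preimage F_exact F_ff F_dense).
- by move=> S; apply: (closedSpec_image F_exact F_ff F_dense).
Qed.
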